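(* Let $K=2$ and suppose that for every horizon $T$ (a multiple of $100$) a valid pair $(\eta,\gamma)=(\eta_T,\gamma_T)$ in the non-trivial regime is chosen. Then there exists $T_0$ such that for all $T\ge T_0$, WSU-UX run on the two-phase loss sequence satisfies $$\mathbb{E}[\ln\pi_{T+1,1}+\ln K]\ge c_1,\qquad c_1=\ln\tfrac54>0.$$
   Context: WSU-UX. Fix integers $K\ge 2$ and $T\ge 1$ and hyperparameters $\eta,\gamma$. The pair $(\eta,\gamma)$ is called valid if $\eta,\gamma\in(0,1/2)$ and $\eta K/\gamma\le 1/2$. Given a fixed loss sequence $\ell_t\in[0,1]^K$, WSU-UX sets $\pi_{1,i}=1/K$ and in each round $t$: forms $\tilde\pi_{t,i}=(1-\gamma)\pi_{t,i}+\gamma/K$; draws $I_t$ with $\Pr(I_t=i\mid\mathcal F_{t-1})=\tilde\pi_{t,i}$; sets $\hat\ell_{t,i}=\ell_{t,i}\mathbf 1[I_t=i]/\tilde\pi_{t,i}$; and updates $\pi_{t+1,i}=\pi_{t,i}\bigl(1-\eta(\hat\ell_{t,i}-\sum_{j}\pi_{t,j}\hat\ell_{t,j})\bigr)$; $\mathcal F_t$ is the history generated by $I_1,\dots,I_t$. Non-trivial regime: $\eta\ge T^{-2/3}$ and $\gamma\le T^{-1/3}$. Two-phase loss sequence ($K=2$, $T$ a multiple of $100$, $T_1=T/100$): $\ell_{t,1}=1,\ell_{t,2}=0$ for $1\le t\le T_1$ and $\ell_{t,1}=0,\ell_{t,2}=1$ for $T_1<t\le T$. *)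

From Stdlib Require Import Reals Lra Lia List Arith.
Import ListNotations.
Open Scope R_scope.

(* Arms are indexed 0..K-1 (arm "1" of the paper is index 0, arm "2" is index 1).
   Round indices t start at 1.  A weight vector is a function nat -> R. *)

Definition sumK (K : nat) (f : nat -> R) : R :=
  fold_right Rplus 0 (map f (seq 0 K)).

Definition valid_pair (K : nat) (eta gamma : R) : Prop :=
  0 < eta < 1/2 /\ 0 < gamma < 1/2 /\ eta * INR K / gamma <= 1/2.

Definition nontrivial_regime (T : nat) (eta gamma : R) : Prop :=
  Rpower (INR T) (-(2/3)) <= eta /\ gamma <= Rpower (INR T) (-(1/3)).

Definition ptilde (K : nat) (gamma : R) (pi : nat -> R) (i : nat) : R :=
  (1 - gamma) * pi i + gamma / INR K.

Definition lhat (K : nat) (gamma : R) (ell : nat -> nat -> R)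
  (pi : nat -> R) (t I i : nat) : R :=
  if Nat.eqb i I then ell t i / ptilde K gamma pi i else 0.

Definition wsu_update (K : nat) (eta gamma : R) (ell : nat -> nat -> R)
  (pi : nat -> R) (t I : nat) : nat -> R :=
  fun i => pi i * (1 - eta * (lhat K gamma ell pi t I i
                   - sumK K (fun j => pi j * lhat K gamma ell pi t I j))).

(* expect K eta gamma ell t n pi f = E[ f(pi_{t+n}) | pi_t = pi ],
   the expectation over the draws I_t, ..., I_{t+n-1}. *)
Fixpoint wsu_expect (K : nat) (eta gamma : R) (ell : nat -> nat -> R)
  (t n : nat) (pi : nat -> R) (f : (nat -> R) -> R) : R :=
  match n with
  | O => f pi
  | S n' => sumK K (fun I => ptilde K gamma pi I *
              wsu_expect K eta gamma ell (S t) n' (wsu_update K eta gamma ell pi t I) f)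
  end.

Definition pi_init (K : nat) : nat -> R := fun _ => 1 / INR K.

Definition two_phase (T : nat) (t i : nat) : R :=
  if Nat.leb t (T / 100) then (if Nat.eqb i 0 then 1 else 0)
  else (if Nat.eqb i 0 then 0 else 1).

(** The ratio [w = pi_2 / pi_1] controls the objective through
    [ln pi_1 = - ln (1 + w) >= - w].  A one-round computation shows that the
    expected ratio grows by at most the factor [1 + 2 eta] while arm 1 suffers
    the losses and shrinks by at least the factor [1 - 2 eta / 3] afterwards,
    as long as every sampling probability is at least [2 eta] (which is what
    validity guarantees).  Hence [E w_(T+1) <= (1 + 2 eta)^T1 (1 - 2 eta/3)^(99 T1)],
    which is at most [1 / (1 + 64 eta T1)]; in the non-trivial regime
    [eta T >= T^(1/3) >= 10], so this is below [3/8 <= ln 2 - ln (5/4)]. *)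

From Stdlib Require Import Reals Lra Lia List.
Open Scope R_scope.

Lemma sum_map_le (f g : nat -> R) (l : list nat) :
  (forall i, In i l -> f i <= g i) ->
  fold_right Rplus 0 (map f l) <= fold_right Rplus 0 (map g l).
Proof.
  induction l as [|i l IH]; intros Hfg; simpl; [lra|].
  apply Rplus_le_compat; [apply Hfg; left; reflexivity|].
  apply IH; intros j Hj; apply Hfg; right; exact Hj.
Qed.

Lemma sum_map_affine (a b : R) (f g : nat -> R) (l : list nat) :
  fold_right Rplus 0 (map (fun i => a * f i - b * g i) l)
  = a * fold_right Rplus 0 (map f l) - b * fold_right Rplus 0 (map g l).
Proof. induction l as [|i l IH]; simpl; [ring|]. rewrite IH; ring. Qed.

Lemma sumK_le (K : nat) (f g : nat -> R) :
  (forall i, (i < K)%nat -> f i <= g i) -> sumK K f <= sumK K g.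
Proof.
  intros Hfg; apply sum_map_le; intros i Hi.
  apply Hfg; apply in_seq in Hi; lia.
Qed.

Lemma sumK_affine (K : nat) (a b : R) (f g : nat -> R) :
  sumK K (fun i => a * f i - b * g i) = a * sumK K f - b * sumK K g.
Proof. apply sum_map_affine. Qed.

Fixpoint rate_prod (r : nat -> R) (t n : nat) : R :=
  match n with
  | O => 1
  | S n => r t * rate_prod r (S t) n
  end.

Lemma rate_prod_nonneg (r : nat -> R) (t n : nat) :
  (forall s, 0 <= r s) -> 0 <= rate_prod r t n.
Proof.
  intros Hr; revert t; induction n as [|n IH]; intros t; simpl; [lra|].
  apply Rmult_le_pos; [apply Hr | apply IH].
Qed.

Lemma rate_prod_add (r : nat -> R) (t k m : nat) :
  rate_prod r t (k + m) = rate_prod r t k * rate_prod r (t + k) m.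
Proof.
  revert t; induction k as [|k IH]; intros t; simpl.
  - rewrite Nat.add_0_r; ring.
  - rewrite IH, <- plus_n_Sm; simpl; ring.
Qed.

Lemma rate_prod_const (r : nat -> R) (c : R) (t n : nat) :
  (forall s, (t <= s < t + n)%nat -> r s = c) -> rate_prod r t n = c ^ n.
Proof.
  revert t; induction n as [|n IH]; intros t Hr; simpl; [reflexivity|].
  rewrite (Hr t) by lia; rewrite IH; [reflexivity|].
  intros s Hs; apply Hr; lia.
Qed.

Section Drift.

Variables (K : nat) (eta gamma : R) (ell : nat -> nat -> R).
Variables (P : (nat -> R) -> Prop) (V : (nat -> R) -> R) (r : nat -> R).
Variables (f : (nat -> R) -> R) (L : R).

Hypothesis ptilde_nonneg :
  forall pi i, P pi -> (i < K)%nat -> 0 <= ptilde K gamma pi i.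
Hypothesis ptilde_sum : forall pi, P pi -> sumK K (ptilde K gamma pi) = 1.
Hypothesis P_update : forall pi t I,
  P pi -> (I < K)%nat -> P (wsu_update K eta gamma ell pi t I).
Hypothesis V_drift : forall pi t, P pi ->
  sumK K (fun I => ptilde K gamma pi I * V (wsu_update K eta gamma ell pi t I))
  <= r t * V pi.
Hypothesis r_nonneg : forall t, 0 <= r t.
Hypothesis f_ge : forall pi, P pi -> L - V pi <= f pi.

Lemma wsu_expect_ge (n t : nat) (pi : nat -> R) :
  P pi -> L - rate_prod r t n * V pi <= wsu_expect K eta gamma ell t n pi f.
Proof.
  revert t pi; induction n as [|n IH]; intros t pi Hpi; simpl.
  - rewrite Rmult_1_l; apply f_ge, Hpi.
  - set (A := rate_prod r (S t) n).
    assert (HA : 0 <= A) by apply rate_prod_nonneg, r_nonneg.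
    apply Rle_trans with
      (sumK K (fun I => L * ptilde K gamma pi I
                        - A * (ptilde K gamma pi I
                               * V (wsu_update K eta gamma ell pi t I)))).
    + rewrite sumK_affine, ptilde_sum by exact Hpi.
      pose proof (V_drift pi t Hpi) as Hdrift. nra.
    + apply sumK_le; intros I HI.
      pose proof (ptilde_nonneg pi I Hpi HI) as Hp.
      pose proof (IH (S t) _ (P_update pi t I Hpi HI)) as Hnext.
      fold A in Hnext. nra.
Qed.

End Drift.

Definition in_simplex2 (pi : nat -> R) : Prop :=
  0 < pi 0%nat /\ 0 < pi 1%nat /\ pi 0%nat + pi 1%nat = 1.

Definition odds (pi : nat -> R) : R := pi 1%nat / pi 0%nat.

Lemma ln_ge_one_sub_inv (y : R) : 0 < y -> 1 - / y <= ln y.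
Proof.
  intros Hy; pose proof (exp_ineq1_le (- ln y)) as H.
  rewrite exp_Ropp, exp_ln in H by exact Hy; lra.
Qed.

Lemma ln_ge_neg_odds (pi : nat -> R) : in_simplex2 pi -> - odds pi <= ln (pi 0%nat).
Proof.
  intros [H0 [H1 Hs]]; unfold odds.
  pose proof (ln_ge_one_sub_inv _ H0) as H.
  replace (/ pi 0%nat) with (1 + pi 1%nat / pi 0%nat) in H
    by (replace (pi 1%nat) with (1 - pi 0%nat) by lra; field; lra).
  lra.
Qed.

Lemma ptilde2 (gamma : R) (pi : nat -> R) (i : nat) :
  ptilde 2 gamma pi i = (1 - gamma) * pi i + gamma / 2.
Proof. unfold ptilde; simpl INR; replace (1 + 1) with 2 by ring; reflexivity. Qed.

Lemma wsu_update2 (eta gamma : R) (ell : nat -> nat -> R) (pi : nat -> R)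
    (t I i : nat) : (I < 2)%nat -> (i < 2)%nat ->
  wsu_update 2 eta gamma ell pi t I i
  = pi i * (1 - eta * ((if Nat.eqb i I then 1 else 0) - pi I)
                    * (ell t I / ptilde 2 gamma pi I)).
Proof.
  intros HI Hi; unfold wsu_update, lhat, sumK; simpl.
  destruct I as [|[|I]]; [| |lia]; destruct i as [|[|i]]; simpl; try lia; ring.
Qed.

Lemma wsu_update2_zero_loss (eta gamma : R) (ell : nat -> nat -> R)
    (pi : nat -> R) (t I i : nat) : (I < 2)%nat -> (i < 2)%nat ->
  ell t I = 0 -> wsu_update 2 eta gamma ell pi t I i = pi i.
Proof.
  intros HI Hi Hl; rewrite wsu_update2 by assumption; rewrite Hl.
  unfold Rdiv; rewrite Rmult_0_l, Rmult_0_r, Rminus_0_r; apply Rmult_1_r.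
Qed.

Lemma two_phase_bounds (T t i : nat) : 0 <= two_phase T t i <= 1.
Proof. unfold two_phase; destruct Nat.leb, Nat.eqb; lra. Qed.

Lemma ptilde2_sum (gamma : R) (pi : nat -> R) :
  in_simplex2 pi -> sumK 2 (ptilde 2 gamma pi) = 1.
Proof.
  intros [_ [_ Hs]]; unfold sumK; cbn [seq map fold_right]; rewrite !ptilde2; nra.
Qed.

Lemma ptilde2_ge (gamma : R) (pi : nat -> R) (i : nat) :
  0 < gamma < 1 -> in_simplex2 pi -> (i < 2)%nat -> gamma / 2 <= ptilde 2 gamma pi i.
Proof.
  intros Hg [H0 [H1 _]] Hi; rewrite ptilde2.
  destruct i as [|[|i]]; [nra | nra | lia].
Qed.

(** Validity for [K = 2] gives [4 eta <= gamma], which keeps every sampling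
    probability at least [gamma / 2 >= 2 eta]. *)
Section TwoArms.

Variables (eta gamma : R).
Hypotheses (eta_pos : 0 < eta) (gamma_bounds : 0 < gamma < 1)
           (eta_small : 4 * eta <= gamma).

Lemma in_simplex2_update (ell : nat -> nat -> R) (pi : nat -> R) (t I : nat) :
  0 <= ell t I <= 1 -> in_simplex2 pi -> (I < 2)%nat ->
  in_simplex2 (wsu_update 2 eta gamma ell pi t I).
Proof.
  intros Hl Hpi HI.
  pose proof (ptilde2_ge gamma pi I gamma_bounds Hpi HI) as Ha.
  destruct Hpi as [H0 [H1 Hs]]; unfold in_simplex2.
  rewrite !wsu_update2 by lia.
  set (a := ptilde 2 gamma pi I) in *.
  assert (Hc : 0 <= eta * (ell t I / a) <= 1/2).
  { split.
    - apply Rmult_le_pos; [lra|]. apply Rmult_le_pos; [lra|].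
      apply Rlt_le, Rinv_0_lt_compat; lra.
    - apply Rmult_le_reg_r with a; [lra|].
      replace (eta * (ell t I / a) * a) with (eta * ell t I) by (field; lra).
      nra. }
  set (c := ell t I / a) in *.
  destruct I as [|[|I]]; [| |lia]; simpl;
    [replace (1 - pi 0%nat) with (pi 1%nat) by lra
    |replace (1 - pi 1%nat) with (pi 0%nat) by lra];
    (split; [|split]; [apply Rmult_lt_0_compat; nra.. | nra]).
Qed.

(** [p] is the weight of the arm with unit loss and [s] its sampling probability:
    drawing it maps [(p, q)] to [(p (1 - eta q / s), q (1 + eta p / s))], drawing
    the other arm changes nothing. *)
Lemma odds_growth (p q s : R) :
  0 < p -> 0 < q -> p + q = 1 -> 2 * eta <= s <= 1 ->
  s * ((q * (1 + eta * p / s)) / (p * (1 - eta * q / s))) + (1 - s) * (q / p)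
  <= (1 + 2 * eta) * (q / p).
Proof.
  intros Hp Hq Hpq Hs.
  assert (Hd : 0 < s - eta * q) by nra.
  replace (s * ((q * (1 + eta * p / s)) / (p * (1 - eta * q / s))))
    with ((q / p) * (s * (s + eta * p) / (s - eta * q))) by (field; lra).
  assert (Hk : s * (s + eta * p) / (s - eta * q) <= s + 2 * eta).
  { apply Rmult_le_reg_r with (s - eta * q); [lra|].
    replace (s * (s + eta * p) / (s - eta * q) * (s - eta * q))
      with (s * (s + eta * p)) by (field; lra).
    assert (0 <= eta * (s - 2 * eta * q)) by (apply Rmult_le_pos; nra).
    replace p with (1 - q) by lra; nra. }
  assert (0 < q / p) by (apply Rdiv_lt_0_compat; lra).
  nra.
Qed.

Lemma odds_decay (p q s : R) :
  0 < p -> 0 < q -> p + q = 1 -> 2 * eta <= s <= 1 ->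
  s * ((p * (1 - eta * q / s)) / (q * (1 + eta * p / s))) + (1 - s) * (p / q)
  <= (1 - 2 * eta / 3) * (p / q).
Proof.
  intros Hp Hq Hpq Hs.
  assert (Hd : 0 < s + eta * p) by nra.
  replace (s * ((p * (1 - eta * q / s)) / (q * (1 + eta * p / s))))
    with ((p / q) * (s * (s - eta * q) / (s + eta * p))) by (field; lra).
  assert (Hk : s * (s - eta * q) / (s + eta * p) <= s - 2 * eta / 3).
  { apply Rmult_le_reg_r with (s + eta * p); [lra|].
    replace (s * (s - eta * q) / (s + eta * p) * (s + eta * p))
      with (s * (s - eta * q)) by (field; lra).
    assert (0 <= eta * (s - 2 * eta * p)) by (apply Rmult_le_pos; nra).
    replace q with (1 - p) by lra; nra. }
  assert (0 < p / q) by (apply Rdiv_lt_0_compat; lra).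
  nra.
Qed.

Definition phase_rate (T t : nat) : R :=
  if Nat.leb t (T / 100) then 1 + 2 * eta else 1 - 2 * eta / 3.

Lemma odds_drift (T t : nat) (pi : nat -> R) : in_simplex2 pi ->
  sumK 2 (fun I => ptilde 2 gamma pi I
                   * odds (wsu_update 2 eta gamma (two_phase T) pi t I))
  <= phase_rate T t * odds pi.
Proof.
  intros Hpi.
  pose proof (ptilde2_ge gamma pi 0 gamma_bounds Hpi ltac:(lia)) as Ha.
  pose proof (ptilde2_ge gamma pi 1 gamma_bounds Hpi ltac:(lia)) as Hb.
  pose proof (ptilde2_sum gamma pi Hpi) as Hab.
  unfold sumK in *; cbn [seq map fold_right] in *; unfold odds, phase_rate.
  destruct Hpi as [H0 [H1 Hs]].
  destruct (Nat.leb t (T / 100)) eqn:Ht.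
  - assert (L0 : two_phase T t 0 = 1) by (unfold two_phase; rewrite Ht; reflexivity).
    assert (L1 : two_phase T t 1 = 0) by (unfold two_phase; rewrite Ht; reflexivity).
    rewrite !(wsu_update2_zero_loss _ _ _ _ _ 1) by (lia || exact L1).
    rewrite !wsu_update2 by lia; rewrite L0; simpl.
    set (a := ptilde 2 gamma pi 0) in *; set (b := ptilde 2 gamma pi 1) in *.
    replace (pi 1%nat * (1 - eta * (0 - pi 0%nat) * (1 / a)))
      with (pi 1%nat * (1 + eta * pi 0%nat / a)) by (field; lra).
    replace (1 - pi 0%nat) with (pi 1%nat) by lra.
    replace (pi 0%nat * (1 - eta * pi 1%nat * (1 / a)))
      with (pi 0%nat * (1 - eta * pi 1%nat / a)) by (field; lra).
    replace (b * (pi 1%nat / pi 0%nat) + 0) with ((1 - a) * (pi 1%nat / pi 0%nat))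
      by (replace b with (1 - a) by lra; ring).
    apply odds_growth; lra.
  - assert (L0 : two_phase T t 0 = 0) by (unfold two_phase; rewrite Ht; reflexivity).
    assert (L1 : two_phase T t 1 = 1) by (unfold two_phase; rewrite Ht; reflexivity).
    rewrite !(wsu_update2_zero_loss _ _ _ _ _ 0) by (lia || exact L0).
    rewrite !wsu_update2 by lia; rewrite L1; simpl.
    set (a := ptilde 2 gamma pi 0) in *; set (b := ptilde 2 gamma pi 1) in *.
    replace (pi 0%nat * (1 - eta * (0 - pi 1%nat) * (1 / b)))
      with (pi 0%nat * (1 + eta * pi 1%nat / b)) by (field; lra).
    replace (1 - pi 1%nat) with (pi 0%nat) by lra.
    replace (pi 1%nat * (1 - eta * pi 0%nat * (1 / b)))
      with (pi 1%nat * (1 - eta * pi 0%nat / b)) by (field; lra).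
    replace (a * (pi 1%nat / pi 0%nat) + (b * _ + 0))
      with (b * (pi 1%nat * (1 - eta * pi 0%nat / b) / (pi 0%nat * (1 + eta * pi 1%nat / b)))
            + (1 - b) * (pi 1%nat / pi 0%nat))
      by (replace a with (1 - b) by lra; ring).
    apply odds_decay; lra.
Qed.

Lemma wsu_expect_two_phase_ge (T t n : nat) (pi : nat -> R) : in_simplex2 pi ->
  ln (INR 2) - rate_prod (phase_rate T) t n * odds pi
  <= wsu_expect 2 eta gamma (two_phase T) t n pi (fun pi => ln (pi 0%nat) + ln (INR 2)).
Proof.
  apply (wsu_expect_ge 2 eta gamma (two_phase T) in_simplex2 odds (phase_rate T)).
  - intros pi' i Hpi' Hi; pose proof (ptilde2_ge gamma pi' i gamma_bounds Hpi' Hi); lra.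
  - apply ptilde2_sum.
  - intros pi' t' I Hpi' HI; apply in_simplex2_update; auto using two_phase_bounds.
  - intros pi' t' Hpi'; apply odds_drift, Hpi'.
  - intros t'; unfold phase_rate; destruct Nat.leb; lra.
  - intros pi' Hpi'; pose proof (ln_ge_neg_odds pi' Hpi'); lra.
Qed.

End TwoArms.

Lemma phase_rate_prod (eta : R) (T : nat) : Nat.modulo T 100 = 0%nat ->
  rate_prod (phase_rate eta T) 1 T
  = (1 + 2 * eta) ^ (T / 100) * (1 - 2 * eta / 3) ^ (99 * (T / 100)).
Proof.
  intros Hm.
  assert (HT : T = (T / 100 + 99 * (T / 100))%nat).
  { pose proof (Nat.div_mod T 100 ltac:(lia)); lia. }
  transitivity (rate_prod (phase_rate eta T) 1 (T / 100 + 99 * (T / 100)));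
    [f_equal; exact HT|].
  rewrite rate_prod_add; f_equal; apply rate_prod_const; intros s Hs; unfold phase_rate.
  - replace (Nat.leb s (T / 100)) with true by (symmetry; apply Nat.leb_le; lia).
    reflexivity.
  - replace (Nat.leb s (T / 100)) with false by (symmetry; apply Nat.leb_gt; lia).
    reflexivity.
Qed.

(** With [y = 2 eta / 3]: [(1 + 2 eta)(1 + 64 eta) = (1 + 3y)(1 + 96y) <= (1 + y)^99]
    by Bernoulli, and [(1 - y)^99 (1 + y)^99 <= 1]. *)
Lemma block_factor_le (eta : R) : 0 < eta < 1/8 ->
  (1 + 2 * eta) * (1 - 2 * eta / 3) ^ 99 * (1 + 64 * eta) <= 1.
Proof.
  intros He; set (y := 2 * eta / 3).
  assert (Hy : 0 < y < 1/10) by (unfold y; lra).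
  assert (B3 : 1 + 3 * y <= (1 + y) ^ 3).
  { pose proof (poly 3 y (proj1 Hy)) as B; simpl INR in B; lra. }
  assert (B96 : 1 + 96 * y <= (1 + y) ^ 96).
  { pose proof (poly 96 y (proj1 Hy)) as B; rewrite INR_IZR_INZ in B; simpl in B; lra. }
  assert (Hconj : (1 - y) ^ 99 * (1 + y) ^ 99 <= 1).
  { rewrite <- Rpow_mult_distr, <- (pow1 99); apply pow_incr; nra. }
  assert (Hgrow : (1 + 2 * eta) * (1 + 64 * eta) <= (1 + y) ^ 99).
  { replace 99%nat with (3 + 96)%nat by reflexivity; rewrite pow_add.
    replace (1 + 2 * eta) with (1 + 3 * y) by (unfold y; field).
    replace (1 + 64 * eta) with (1 + 96 * y) by (unfold y; field).
    apply Rmult_le_compat; lra. }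
  assert (0 <= (1 - y) ^ 99) by (apply pow_le; lra).
  apply Rle_trans with ((1 - y) ^ 99 * (1 + y) ^ 99); [|exact Hconj].
  replace ((1 + 2 * eta) * (1 - y) ^ 99 * (1 + 64 * eta))
    with ((1 - y) ^ 99 * ((1 + 2 * eta) * (1 + 64 * eta))) by ring.
  apply Rmult_le_compat_l; lra.
Qed.

Lemma two_phase_prod_le (eta : R) (n : nat) : 0 < eta < 1/8 ->
  (1 + 2 * eta) ^ n * (1 - 2 * eta / 3) ^ (99 * n) <= / (1 + 64 * eta * INR n).
Proof.
  intros He.
  set (c := (1 + 2 * eta) * (1 - 2 * eta / 3) ^ 99).
  assert (Hc0 : 0 <= c) by (apply Rmult_le_pos; [lra | apply pow_le; lra]).
  assert (Hc : c <= / (1 + 64 * eta)).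
  { apply Rmult_le_reg_r with (1 + 64 * eta); [lra|].
    rewrite Rinv_l by lra; apply block_factor_le, He. }
  rewrite pow_mult, <- Rpow_mult_distr; fold c.
  apply Rle_trans with ((/ (1 + 64 * eta)) ^ n); [apply pow_incr; lra|].
  rewrite pow_inv; apply Rinv_le_contravar.
  - pose proof (pos_INR n); nra.
  - pose proof (poly n (64 * eta) ltac:(lra)); lra.
Qed.

Lemma eta_mul_horizon_ge (eta : R) (T : nat) : (1000 <= T)%nat ->
  Rpower (INR T) (- (2 / 3)) <= eta -> 10 <= eta * INR T.
Proof.
  intros HT He.
  assert (HT0 : 1000 <= INR T)
    by (replace 1000 with (INR 1000) by (rewrite INR_IZR_INZ; reflexivity); apply le_INR, HT).
  assert (Hcube : Rpower 1000 (1 / 3) = 10).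
  { replace 1000 with (Rpower 10 (INR 3)) by (rewrite Rpower_pow by lra; simpl; ring).
    rewrite Rpower_mult; replace (INR 3 * (1 / 3)) with 1 by (simpl; field).
    apply Rpower_1; lra. }
  assert (Hroot : Rpower (INR T) (- (2 / 3)) * INR T = Rpower (INR T) (1 / 3)).
  { rewrite <- (Rpower_1 (INR T)) at 2 by lra.
    rewrite <- Rpower_plus; f_equal; field. }
  rewrite <- Hcube.
  apply Rle_trans with (Rpower (INR T) (- (2 / 3)) * INR T).
  - rewrite Hroot; apply Rle_Rpower_l; lra.
  - apply Rmult_le_compat_r; lra.
Qed.

Lemma ln_five_fourths_le : ln (5 / 4) <= ln 2 - 3 / 8.
Proof.
  replace 2 with (5 / 4 * (8 / 5)) at 1 by field; rewrite ln_mult by lra.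
  pose proof (ln_ge_one_sub_inv (8 / 5) ltac:(lra)) as H.
  replace (/ (8 / 5)) with (5 / 8) in H by field; lra.
Qed.

Lemma valid_pair2_eta_small (eta gamma : R) :
  valid_pair 2 eta gamma -> 4 * eta <= gamma.
Proof.
  intros [_ [Hg Hv]]; simpl INR in Hv.
  apply Rmult_le_compat_r with (r := gamma) in Hv; [|lra].
  replace (eta * (1 + 1) / gamma * gamma) with (eta * 2) in Hv by (field; lra).
  lra.
Qed.

Theorem claim1 (eta gamma : nat -> R)
  (Hpar : forall T : nat, (1 <= T)%nat -> Nat.modulo T 100 = 0%nat ->
     valid_pair 2 (eta T) (gamma T) /\ nontrivial_regime T (eta T) (gamma T)) :
  exists T0 : nat, forall T : nat, (T0 <= T)%nat -> (1 <= T)%nat ->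
    Nat.modulo T 100 = 0%nat ->
    wsu_expect 2 (eta T) (gamma T) (two_phase T) 1 T (pi_init 2)
      (fun pi => ln (pi 0%nat) + ln (INR 2)) >= ln (5/4).
Proof.
  exists 1000%nat; intros T HT HT1 Hm.
  destruct (Hpar T HT1 Hm) as [Hvalid [Hregime _]].
  pose proof (valid_pair2_eta_small _ _ Hvalid) as Hsmall.
  destruct Hvalid as [He [Hg _]].
  assert (Hgam : 0 < gamma T < 1) by lra.
  assert (Hinit : in_simplex2 (pi_init 2)) by (unfold in_simplex2, pi_init; simpl; lra).
  pose proof (wsu_expect_two_phase_ge (eta T) (gamma T) (proj1 He) Hgam Hsmall T 1 T
                (pi_init 2) Hinit) as Hexp.
  rewrite phase_rate_prod in Hexp by exact Hm.
  replace (odds (pi_init 2)) with 1 in Hexp by (unfold odds, pi_init; field; simpl; lra).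
  pose proof (two_phase_prod_le (eta T) (T / 100) ltac:(lra)) as Hprod.
  pose proof (eta_mul_horizon_ge (eta T) T HT Hregime) as HeT.
  assert (HT100 : INR T = 100 * INR (T / 100)).
  { rewrite (Nat.div_mod T 100) at 1 by lia; rewrite Hm, Nat.add_0_r, mult_INR.
    f_equal; rewrite INR_IZR_INZ; reflexivity. }
  assert (Hsmall_prod : / (1 + 64 * eta T * INR (T / 100)) <= 3 / 8).
  { rewrite <- (Rinv_inv (3 / 8)); apply Rinv_le_contravar; [lra|]. nra. }
  pose proof ln_five_fourths_le.
  replace (INR 2) with 2 in * by (simpl; lra).
  lra.
Qed.
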